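(* Let $k$ be a field, $Q,q\in k^\times$, $d\ge1$ and $r\geq d$. Then for any $n\ge1$ and any $\mathbf a\in\mathbb I_n^d$, the $\mathcal H^B_{Q,q}(d)$-module $V(\mathbf a,n)$ is isomorphic to $V(\mathbf b,2r+1)$ for some $\mathbf b\in\mathbb I_{2r+1}^d$.
   Context: $\mathcal H^B_{Q,q}(d)$ is the algebra generated by $T_0,\dots,T_{d-1}$ with relations $(T_0+Q)(T_0-Q^{-1})=0$; $(T_i+q)(T_i-q^{-1})=0$ ($i>0$); $T_iT_{i+1}T_i=T_{i+1}T_iT_{i+1}$ ($i>0$); $T_0T_1T_0T_1=T_1T_0T_1T_0$; $T_iT_j=T_jT_i$ ($|i-j|>1$). For $n=2s$ let $\mathbb I_n=\{-\tfrac{2s-1}{2},\dots,-\tfrac12,\tfrac12,\dots,\tfrac{2s-1}{2}\}$ and for $n=2s+1$ let $\mathbb I_n=\{-s,\dots,s\}$; $V_n$ has basis $\{v_i:i\in\mathbb I_n\}$, and $v_{\mathbf a}=v_{a_1}\otimes\cdots\otimes v_{a_d}$. $R_q(v_i\otimes v_j)=q^{-1}v_i\otimes v_j$ if $i=j$, $v_j\otimes v_i$ if $i<j$, $v_j\otimes v_i+(q^{-1}-q)v_i\otimes v_j$ if $i>j$; $K_Q(v_i)=Q^{-1}v_i$ if $i=0$, $v_{-i}$ if $i>0$, $v_{-i}+(Q^{-1}-Q)v_i$ if $i<0$. The algebra acts on $V_n^{\otimes d}$ from the right: $T_i$ ($i>0$) by $R_q$ on factors $i,i+1$, $T_0$ by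 $K_Q$ on the first factor. The Weyl group $W^B(d)$ (Coxeter generators $s_0,\dots,s_{d-1}$) acts on $\mathbb I_n^d$ by $s_i$ ($i>0$) swapping the entries $a_i,a_{i+1}$ and $s_0$ replacing $a_1$ by $-a_1$. $V(\mathbf a,n)$ is the subspace of $V_n^{\otimes d}$ spanned by $\{v_{\sigma\mathbf a}:\sigma\in W^B(d)\}$; it is an $\mathcal H^B_{Q,q}(d)$-submodule. *)

From mathcomp Require Import all_boot all_order all_algebra.
Set Implicit Arguments. Unset Strict Implicit. Unset Printing Implicit Defensive.
Import GRing.Theory.
Local Open Scope ring_scope.

(* Index set I_n is encoded by 'I_n : the ordinal j stands for the element
   (2j - (n-1))/2 of I_n.  This bijection is order preserving, sends
   negation to rev_ord, and j is 0 iff 2j = n-1, positive iff 2j > n-1. *)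

Notation word n d := {ffun 'I_d -> 'I_n}.

(* vectors of V_n^{(x)d}: coordinates with respect to the basis v_a *)
Notation tens k n d := {ffun {ffun 'I_d -> 'I_n} -> GRing.Field.sort k}.

Definition sc (k : fieldType) (T : finType) (c : k) (v : {ffun T -> k}) :
  {ffun T -> k} := [ffun b => c * v b].

Section Defs.
Variables (k : fieldType) (Q q : k) (n d : nat).

Definition is_zero_idx (x : 'I_n) : bool := (x.*2 == n.-1)%N.
Definition is_pos_idx (x : 'I_n) : bool := (n.-1 < x.*2)%N.

Definition predo (t : 'I_d) : 'I_d :=
  Ordinal (leq_ltn_trans (leq_pred t) (ltn_ord t)).

(* Coxeter generator s_t of W^B(d) acting on words (t = 0 is s_0;
   t > 0 swaps the entries at 1-based positions t, t+1, i.e. 0-based t-1, t) *)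
Definition sW (t : 'I_d) (a : word n d) : word n d :=
  if t == 0 :> nat then [ffun j => if j == t then rev_ord (a t) else a j]
  else [ffun j => if j == predo t then a t
                 else if j == t then a (predo t) else a j].

Definition bvec (a : word n d) : tens k n d := [ffun b => (b == a)%:R].

Definition actB (t : 'I_d) (a : word n d) : tens k n d :=
  if t == 0 :> nat then
    let x := a t in
    if is_zero_idx x then sc Q^-1 (bvec a)
    else if is_pos_idx x then bvec (sW t a)
    else bvec (sW t a) + sc (Q^-1 - Q) (bvec a)
  else
    let x := a (predo t) in let y := a t in
    if x == y then sc q^-1 (bvec a)
    else if (x < y)%N then bvec (sW t a)
    else bvec (sW t a) + sc (q^-1 - q) (bvec a).

Definition actT (t : 'I_d) (v : tens k n d) : tens k n d :=
  \sum_(a : word n d) sc (v a) (actB t a).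

Definition inOrbit (a b : word n d) : bool :=
  connect (fun x y => [exists t : 'I_d, y == sW t x]) a b.

(* V(a,n): span of the v_{sigma a}, i.e. vectors supported on the orbit *)
Definition inVa (a : word n d) (v : tens k n d) : Prop :=
  forall c : word n d, ~~ inOrbit a c -> v c = 0.

End Defs.

Definition Hiso (k : fieldType) (Q q : k) (d n m : nat)
    (a : word n d) (b : word m d) : Prop :=
  exists f : tens k n d -> tens k m d,
    [/\ forall (c : k) (v w : tens k n d), f (sc c v + w) = sc c (f v) + f w,
        forall v, inVa a v -> inVa b (f v),
        forall v w, inVa a v -> inVa a w -> f v = f w -> v = w,
        forall w, inVa b w -> exists2 v, inVa a v & f v = w
      & forall (t : 'I_d) v, inVa a v ->
          f (actT Q q t v) = actT Q q t (f v)].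

From mathcomp Require Import all_boot all_algebra zify.
Set Implicit Arguments.
Unset Strict Implicit.
Unset Printing Implicit Defensive.
Import GRing.Theory.
Local Open Scope ring_scope.

(* The generators act on a basis vector v_c of V(a,n) by formulas that only
   see which entries of c are zero or positive and how neighbouring entries
   compare.  Hence a relabelling phi of the values, odd (phi (-x) = - phi x)
   and strictly increasing on the set S of all +-a_i, transports V(a,n)
   isomorphically onto V(phi a, m) via v_c |-> v_(phi c).  As S has at most
   d <= r positive elements,
     x |-> #{p in S | 0 < p <= x} - #{p in S | 0 < p <= -x}
   is such a relabelling, with values in {-r, ..., r} = I_(2r+1).  No
   hypothesis on Q or q is needed. *)

Lemma connect_invariant (T : finType) (e : rel T) (P : T -> Prop) x y :
  (forall u v, e u v -> P u -> P v) -> connect e x y -> P x -> P y.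
Proof.
move=> eP /connectP[p + ->]; elim: p x => //= z p IHp x /andP[exz pz] Px.
exact: IHp pz (eP _ _ exz Px).
Qed.

Lemma rev_ord_ltn n (x y : 'I_n) : (rev_ord x < rev_ord y)%N = (y < x)%N.
Proof.
by rewrite /=; have := ltn_ord x; have := ltn_ord y => ? ?; apply/idP/idP; lia.
Qed.

Lemma is_zero_idxE n (x : 'I_n) : is_zero_idx x = (rev_ord x == x).
Proof.
rewrite /is_zero_idx -val_eqE /=.
by have := ltn_ord x => ?; apply/eqP/eqP; lia.
Qed.

Lemma is_pos_idxE n (x : 'I_n) : is_pos_idx x = (rev_ord x < x)%N.
Proof.
by rewrite /is_pos_idx /=; have := ltn_ord x => ?; apply/idP/idP; lia.
Qed.

Lemma inOrbit_sW n d (a c : word n d) t : inOrbit a c -> inOrbit a (sW t c).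
Proof. by move/connect_trans; apply; apply/connect1/existsP; exists t. Qed.

Section LinearExtension.
Variables (k : fieldType) (d n m : nat).
Implicit Types (G H : word n d -> tens k m d) (v w : tens k n d).

Definition lin G v : tens k m d := \sum_c sc (v c) (G c).

Lemma linE G v b : lin G v b = \sum_c v c * G c b.
Proof. by rewrite sum_ffunE; apply: eq_bigr => c _; rewrite ffunE. Qed.

Lemma linD G v w : lin G (v + w) = lin G v + lin G w.
Proof.
apply/ffunP => b; rewrite ffunE !linE -big_split /=.
by apply: eq_bigr => c _; rewrite ffunE mulrDl.
Qed.

Lemma linZ G x v : lin G (sc x v) = sc x (lin G v).
Proof.
apply/ffunP => b; rewrite ffunE !linE mulr_sumr.
by apply: eq_bigr => c _; rewrite ffunE mulrA.
Qed.

Lemma lin_bvec G c : lin G (bvec k c) = G c.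
Proof.
apply/ffunP => b; rewrite linE (bigD1 c) //= ffunE eqxx mul1r big1 ?addr0 //.
by move=> c' /negbTE c'c; rewrite ffunE c'c mul0r.
Qed.

Lemma eq_lin G H v : (forall c, v c != 0 -> G c = H c) -> lin G v = lin H v.
Proof.
move=> eGH; apply/ffunP => b; rewrite !linE; apply: eq_bigr => c _.
by have [->|/eGH->] := eqVneq (v c) 0; rewrite ?mul0r.
Qed.

End LinearExtension.

Lemma lin_comp (k : fieldType) d n m p (G : word m d -> tens k p d)
    (H : word n d -> tens k m d) v :
  lin G (lin H v) = lin (fun c => lin G (H c)) v.
Proof.
apply/ffunP => b; rewrite !linE.
under eq_bigr do rewrite linE mulr_suml.
rewrite exchange_big; apply: eq_bigr => c _.
by rewrite linE mulr_sumr; apply: eq_bigr => c' _; rewrite mulrA.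
Qed.

Section Relabel.
Variables (n m d : nat) (S : {set 'I_n}) (phi : 'I_n -> 'I_m).
Hypothesis S_rev : {in S, forall x, rev_ord x \in S}.
Hypothesis phi_rev : {morph phi : x / rev_ord x}.
Hypothesis phi_lt : {in S &, {homo phi : x y / (x < y)%N}}.

Lemma phi_ltE : {in S &, {mono phi : x y / (x < y)%N}}.
Proof.
move=> x y Sx Sy; apply/idP/idP => [lt_phi|]; last exact: phi_lt.
case: ltngtP => // [lt_yx|/val_inj eq_xy]; last by rewrite eq_xy ltnn in lt_phi.
by have := phi_lt Sy Sx lt_yx; rewrite ltnNge ltnW.
Qed.

Lemma phi_eqE : {in S &, forall x y, (phi x == phi y) = (x == y)}.
Proof.
move=> x y Sx Sy; apply/eqP/eqP => [eq_phi|-> //].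
case: (ltngtP x y) => [lt_xy|lt_yx|/val_inj //].
  by have := phi_lt Sx Sy lt_xy; rewrite eq_phi ltnn.
by have := phi_lt Sy Sx lt_yx; rewrite eq_phi ltnn.
Qed.

Lemma phi_zeroE x : x \in S -> is_zero_idx (phi x) = is_zero_idx x.
Proof. by move=> Sx; rewrite !is_zero_idxE -phi_rev phi_eqE ?S_rev. Qed.

Lemma phi_posE x : x \in S -> is_pos_idx (phi x) = is_pos_idx x.
Proof. by move=> Sx; rewrite !is_pos_idxE -phi_rev phi_ltE ?S_rev. Qed.

Definition relabel (c : word n d) : word m d := [ffun j => phi (c j)].

Definition word_over (c : word n d) := forall j, c j \in S.

Lemma relabel_sW t c : relabel (sW t c) = sW t (relabel c).
Proof.
apply/ffunP => j; rewrite /sW; case: ifP => _; rewrite !ffunE.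
  by case: ifP => _; rewrite ?ffunE ?phi_rev.
by case: ifP => _; rewrite ?ffunE //; case: ifP => _; rewrite ?ffunE.
Qed.

Lemma word_over_sW t c : word_over c -> word_over (sW t c).
Proof.
move=> Sc j; rewrite /sW; case: ifP => _; rewrite ffunE.
  by case: ifP => _; rewrite ?S_rev.
by case: ifP => _; [|case: ifP].
Qed.

Lemma relabel_inj c c' :
  word_over c -> word_over c' -> relabel c = relabel c' -> c = c'.
Proof.
move=> Sc Sc' /ffunP eq_phi; apply/ffunP => j; apply/eqP.
by rewrite -phi_eqE //; have := eq_phi j; rewrite !ffunE => ->.
Qed.

Section Orbit.
Variable a : word n d.
Hypothesis Sa : word_over a.

Lemma inOrbit_word_over c : inOrbit a c -> word_over c.
Proof.
move=> ac; apply: (connect_invariant _ ac Sa) => u v /existsP[t /eqP->].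
exact: word_over_sW.
Qed.

Lemma inOrbit_relabel c : inOrbit a c -> inOrbit (relabel a) (relabel c).
Proof.
move=> ac; pose P c := inOrbit (relabel a) (relabel c).
apply: (connect_invariant (P := P) _ ac).
  by move=> u v /existsP[t /eqP->]; rewrite /P relabel_sW; apply: inOrbit_sW.
exact: connect0.
Qed.

Lemma inOrbit_relabelP w :
  inOrbit (relabel a) w -> exists2 c, inOrbit a c & relabel c = w.
Proof.
move=> bw; pose P w := exists2 c, inOrbit a c & relabel c = w.
apply: (connect_invariant (P := P) _ bw); last first.
  by exists a => //; apply: connect0.
move=> u v /existsP[t /eqP->] [c ac <-].
by exists (sW t c); rewrite ?relabel_sW ?inOrbit_sW.
Qed.

Variables (k : fieldType) (Q q : k).

Local Notation f := (lin (fun c => bvec k (relabel c))).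

Lemma relabel_actB t c :
  word_over c -> f (actB Q q t c) = actB Q q t (relabel c).
Proof.
move=> Sc; have Sj j := Sc j.
rewrite /actB !ffunE; case: ifP => _.
  rewrite phi_zeroE // phi_posE //.
  case: ifP => _; first by rewrite linZ lin_bvec.
  by case: ifP => _; rewrite ?linD ?linZ !lin_bvec relabel_sW.
rewrite phi_eqE // phi_ltE //.
case: ifP => _; first by rewrite linZ lin_bvec.
by case: ifP => _; rewrite ?linD ?linZ !lin_bvec relabel_sW.
Qed.

Lemma relabel_coord v c :
  inVa a v -> inOrbit a c -> f v (relabel c) = v c.
Proof.
move=> av ac; rewrite linE (bigD1 c) //= ffunE eqxx mulr1 big1 ?addr0 //.
move=> c' c'c; rewrite ffunE.
have [ac'|/av->] := boolP (inOrbit a c'); last by rewrite mul0r.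
case: eqP => [|_]; last by rewrite mulr0.
move/(relabel_inj (inOrbit_word_over ac) (inOrbit_word_over ac')) => eq_c.
by rewrite eq_c eqxx in c'c.
Qed.

Lemma relabel_coord_out v w :
  inVa a v -> ~~ inOrbit (relabel a) w -> f v w = 0.
Proof.
move=> av aw; rewrite linE big1 // => c _; rewrite ffunE.
have [ac|/av->] := boolP (inOrbit a c); last by rewrite mul0r.
case: eqP => [eq_w|]; last by rewrite mulr0.
by rewrite eq_w inOrbit_relabel in aw.
Qed.

Lemma Hiso_relabel : Hiso Q q a (relabel a).
Proof.
exists f; split.
- by move=> x v w; rewrite linD linZ.
- by move=> v av w; apply: relabel_coord_out.
- move=> v w av aw eq_f; apply/ffunP => c.
  have [ac|/negPf ac] := boolP (inOrbit a c); last by rewrite av ?aw ?ac.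
  by rewrite -(relabel_coord av ac) -(relabel_coord aw ac) eq_f.
- move=> w bw; pose v := [ffun c => if inOrbit a c then w (relabel c) else 0].
  have av : inVa a v by move=> c /negPf ac; rewrite ffunE ac.
  exists v => //; apply/ffunP => w'.
  have [/inOrbit_relabelP[c ac <-]|bw'] := boolP (inOrbit (relabel a) w').
    by rewrite relabel_coord // ffunE ac.
  by rewrite relabel_coord_out ?bw.
- move=> t v av; rewrite /actT -/(lin _ _) -/(lin _ (f v)) !lin_comp.
  apply: eq_lin => c vc; rewrite lin_bvec relabel_actB //.
  by apply: inOrbit_word_over; apply: contraNT vc => /av->.
Qed.

End Orbit.
End Relabel.

Section Counting.
Variables (n : nat) (P : {set 'I_n}).
Implicit Types x y : 'I_n.

Definition cnt_le (x : 'I_n) := #|[set p in P | (p <= x)%N]|.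

Lemma cnt_le_max x : (cnt_le x <= #|P|)%N.
Proof. by apply/subset_leq_card/subsetP => p; rewrite inE => /andP[]. Qed.

Lemma cnt_le_homo x y : (x <= y)%N -> (cnt_le x <= cnt_le y)%N.
Proof.
move=> le_xy; apply/subset_leq_card/subsetP => p; rewrite !inE.
by case/andP=> -> /leq_trans->.
Qed.

Lemma cnt_le_lt x y : y \in P -> (x < y)%N -> (cnt_le x < cnt_le y)%N.
Proof.
move=> Py lt_xy; have y_new : y \notin [set p in P | (p <= x)%N].
  by rewrite inE negb_and leqNgt lt_xy orbT.
have sub : y |: [set p in P | (p <= x)%N] \subset [set p in P | (p <= y)%N].
  apply/subsetP => p; rewrite !inE => /orP[/eqP->|/andP[-> /leq_trans->]] //.
    by rewrite Py leqnn.
  exact: ltnW.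
by apply: leq_trans (subset_leq_card sub); rewrite cardsU1 y_new.
Qed.

End Counting.

Section Compress.
Variables (n d r : nat) (a : word n d).
Hypothesis le_dr : (d <= r)%N.

Definition pm_entries : {set 'I_n} :=
  [set x | [exists j, (x == a j) || (x == rev_ord (a j))]].

Lemma pm_entries_rev : {in pm_entries, forall x, rev_ord x \in pm_entries}.
Proof.
move=> x; rewrite !inE => /existsP[j /orP[]/eqP->]; apply/existsP; exists j.
  by rewrite eqxx orbT.
by rewrite rev_ordK eqxx.
Qed.

Lemma word_over_pm_entries : word_over pm_entries a.
Proof. by move=> j; rewrite inE; apply/existsP; exists j; rewrite eqxx. Qed.

Definition pos_entries : {set 'I_n} := [set x in pm_entries | is_pos_idx x].

Lemma card_pos_entries : (#|pos_entries| <= d)%N.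
Proof.
pose pos_part j := if is_pos_idx (a j) then a j else rev_ord (a j).
have sub : pos_entries \subset pos_part @: 'I_d.
  apply/subsetP => x; rewrite !inE => /andP[/existsP[j /orP[]/eqP->] pos_x];
    apply/imsetP; exists j; rewrite // /pos_part.
    by rewrite pos_x.
  move: pos_x; rewrite !is_pos_idxE rev_ordK => lt_a.
  by rewrite ltnNge ltnW.
apply: leq_trans (subset_leq_card sub) _.
by rewrite (leq_trans (leq_imset_card _ _)) ?card_ord.
Qed.

Local Notation cnt := (cnt_le pos_entries).

Lemma cnt_le_r x : (cnt x <= r)%N.
Proof.
exact: leq_trans (cnt_le_max _ _) (leq_trans card_pos_entries le_dr).
Qed.

Lemma compress_subproof x : (r + cnt x - cnt (rev_ord x) < r.*2.+1)%N.
Proof. by have := cnt_le_r x; have := cnt_le_r (rev_ord x); lia. Qed.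

Definition compress x : 'I_(r.*2.+1) := Ordinal (compress_subproof x).

Lemma compress_rev : {morph compress : x / rev_ord x}.
Proof.
move=> x; apply: val_inj; rewrite /= rev_ordK.
by have := cnt_le_r x; have := cnt_le_r (rev_ord x); lia.
Qed.

Lemma compress_lt : {in pm_entries &, {homo compress : x y / (x < y)%N}}.
Proof.
move=> x y Sx Sy lt_xy; rewrite /=.
have le_cnt : (cnt x <= cnt y)%N by apply/cnt_le_homo/ltnW.
have le_cnt_rev : (cnt (rev_ord y) <= cnt (rev_ord x))%N.
  by apply/cnt_le_homo/ltnW; rewrite rev_ord_ltn.
have := cnt_le_r x; have := cnt_le_r (rev_ord x).
have := cnt_le_r y; have := cnt_le_r (rev_ord y).
have [pos_y|npos_y] := boolP (is_pos_idx y).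
  have : (cnt x < cnt y)%N by apply: cnt_le_lt; rewrite // inE Sy.
  lia.
have : (cnt (rev_ord y) < cnt (rev_ord x))%N.
  apply: cnt_le_lt; last by rewrite rev_ord_ltn.
  rewrite inE pm_entries_rev //= is_pos_idxE rev_ordK.
  by move: npos_y lt_xy; rewrite is_pos_idxE /=; have := ltn_ord y; lia.
lia.
Qed.

End Compress.

Theorem lemma2p15 (k : fieldType) (Q q : k) (d r : nat) :
  Q != 0 -> q != 0 -> (1 <= d)%N -> (d <= r)%N ->
  forall (n : nat) (a : word n d), (1 <= n)%N ->
  exists b : word (r.*2.+1) d, Hiso Q q a b.
Proof.
move=> _ _ _ le_dr n a _.
exists (relabel (compress a le_dr) a).
exact (Hiso_relabel (@pm_entries_rev _ _ a) (compress_rev a le_dr)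
  (compress_lt le_dr) (word_over_pm_entries a) Q q).
Qed.
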